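(* Let $M$ be a topological space, $\mathcal{B}(M)$ its Borel $\sigma$-algebra and $\mathfrak{C}$ a quasipoint of $\mathcal{B}(M)$. Then $\mathfrak{C}$ contains some quasipoint $\mathfrak{B}$ of the lattice $\mathcal{T}(M)$ of open subsets of $M$ if and only if $\partial U\notin\mathfrak{C}$ for all open $U\subseteq M$, where $\partial U=\overline{U}\cap\overline{M\setminus U}$.
   Context: $\mathcal{T}(M)$ has operations $U\wedge V=U\cap V$, $U\vee V=U\cup V$. A quasipoint in a lattice $\mathbb{L}$ with least element $0$ is a maximal (w.r.t. inclusion) subset $\mathfrak{B}\subseteq\mathbb{L}$ such that $\mathfrak{B}\neq\emptyset$, $0\notin\mathfrak{B}$, and for all $a,b\in\mathfrak{B}$ there is $c\in\mathfrak{B}$ with $c\le a\wedge b$. *)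

From HB Require Import structures.
From mathcomp Require Import all_boot all_order all_algebra.
From mathcomp Require Import all_classical topology measure.

Local Open Scope classical_set_scope.

(* A lattice of subsets L of T, ordered by inclusion, with meet = intersection
   and least element = the empty set. *)
Definition quasipoint_pre {T : Type} (L : set (set T)) (B : set (set T)) : Prop :=
  [/\ B `<=` L, B !=set0, ~ B set0 &
      forall a b, B a -> B b -> exists2 c, B c & c `<=` a `&` b].

Definition is_quasipoint {T : Type} (L : set (set T)) (B : set (set T)) : Prop :=
  quasipoint_pre L B /\
  forall B', quasipoint_pre L B' -> B `<=` B' -> B' = B.

Definition open_sets (M : topologicalType) : set (set M) := [set U | open U].

Definition borel_sets (M : topologicalType) : set (set M) := <<s open_sets M >>.

Definition boundary {M : topologicalType} (U : set M) : set M :=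
  closure U `&` closure (~` U).

From HB Require Import structures.
From mathcomp Require Import all_boot all_order all_algebra.
From mathcomp Require Import all_classical topology measure.
Set Implicit Arguments.
Unset Strict Implicit.
Unset Printing Implicit Defensive.

Local Open Scope classical_set_scope.

(* A Borel quasipoint [C] behaves like an ultrafilter on the Borel sets: it is
   upward closed, closed under intersection, and contains a set or its
   complement.  If [C] contains an open quasipoint [B] and [C (boundary U)],
   then [U] or an element of [B] disjoint from [U] (hence from [closure U]) is
   disjoint from the boundary, which is absurd.  Conversely, if [C] misses all
   boundaries, the open members of [C] form an open quasipoint: were it not
   maximal, a larger one would contain some open [U] outside [C]; then [C]
   contains both [~` U] and [~` boundary U], hence the open set
   [~` closure U], which lies in the larger quasipoint but is disjoint from
   [U]. *)

Lemma quasipoint_pre_meet {T : Type} (L B : set (set T)) (a b : set T) :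
  quasipoint_pre L B -> B a -> B b -> a `&` b !=set0.
Proof.
move=> [_ _ B0 Bdir] Ba Bb; have [c Bc cab] := Bdir _ _ Ba Bb.
apply/set0P/eqP => ab0; apply: B0.
by have <- // : c = set0; apply/seteqP; split=> // x /cab; rewrite ab0.
Qed.

Section Quasipoint.
Variables (T : Type) (L C : set (set T)).
Hypothesis qC : is_quasipoint L C.

(* If the traces [A `&` d] of [C] are nonempty and lie in [L], they generate
   a quasipoint containing [C], so by maximality every [X] in [L] above such
   a trace is already in [C]. *)
Lemma quasipoint_trace_saturated (A X c : set T) :
  (forall d, C d -> L (A `&` d)) -> (forall d, C d -> A `&` d !=set0) ->
  L X -> C c -> A `&` c `<=` X -> C X.
Proof.
have [[CL [c0 Cc0] _ Cdir] Cmax] := qC; move=> LAC AC0 LX Cc AcX.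
pose C' := [set Y | L Y /\ exists2 d, C d & A `&` d `<=` Y].
have CC' : C `<=` C' by move=> Y CY; split; [exact: CL | exists Y => // x []].
have qC' : quasipoint_pre L C'.
  split; first by move=> Y [].
  - by exists c0; apply: CC'.
  - move=> [_ [d Cd d0]]; have [x Adx] := AC0 d Cd; exact: d0 Adx.
  - move=> Y Z [_ [d1 Cd1 d1Y]] [_ [d2 Cd2 d2Z]].
    have [d Cd dsub] := Cdir _ _ Cd1 Cd2.
    exists (A `&` d); first by split; [exact: LAC | exists d].
    by move=> x [Ax /dsub [? ?]]; split; [apply: d1Y | apply: d2Z].
by rewrite -(Cmax _ qC' CC'); split=> //; exists c.
Qed.

Lemma quasipoint_neq0 (c : set T) : C c -> c !=set0.
Proof. by have [[_ _ C0 _] _] := qC => Cc; apply/set0P/eqP => c0; rewrite c0 in Cc. Qed.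

Lemma quasipoint_upward (A c : set T) : L A -> C c -> c `<=` A -> C A.
Proof.
have [[CL _ _ _] _] := qC; move=> LA Cc cA.
apply: (@quasipoint_trace_saturated setT _ c) => // [d Cd|d Cd|]; rewrite ?setTI //.
- exact: CL.
- exact: quasipoint_neq0.
Qed.

Hypothesis LI : setI_closed L.

Lemma quasipoint_setI (a b : set T) : C a -> C b -> C (a `&` b).
Proof.
have [[CL _ _ Cdir] _] := qC; move=> Ca Cb.
have [c Cc cab] := Cdir _ _ Ca Cb.
by apply: (quasipoint_upward _ Cc) => //; apply: LI; apply: CL.
Qed.

Lemma quasipoint_disjoint (A : set T) :
  L A -> ~ C A -> exists2 c, C c & A `&` c = set0.
Proof.
have [[CL [c0 Cc0] _ _] _] := qC; move=> LA nCA; apply: contrapT => nodisj.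
apply/nCA/(@quasipoint_trace_saturated A A c0) => // [d Cd|d Cd].
- by apply: LI => //; exact: CL.
- by apply/set0P/eqP => Ad0; apply: nodisj; exists d.
Qed.

Lemma quasipoint_setC (A : set T) : L (~` A) -> L A -> ~ C A -> C (~` A).
Proof.
move=> LCA LA nCA; have [c Cc Ac0] := quasipoint_disjoint LA nCA.
apply: (quasipoint_upward LCA Cc) => // x cx Ax.
by have : (A `&` c) x by []; rewrite Ac0.
Qed.

End Quasipoint.

Lemma quasipoint_pre_trace {T : Type} (L L' C : set (set T)) :
  is_quasipoint L C -> L' `<=` L -> L' setT -> setI_closed L' ->
  quasipoint_pre L' (C `&` L').
Proof.
move=> qC L'L L'T L'I; have [[_ [c0 Cc0] Cn0 Cdir] _] := qC.
split; first by move=> X [].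
- by exists setT; split=> //; apply: (quasipoint_upward qC _ Cc0) => //; apply: L'L.
- by move=> [/Cn0].
- move=> a b [Ca L'a] [Cb L'b]; have [c Cc cab] := Cdir _ _ Ca Cb.
  exists (a `&` b) => //; split; last exact: L'I.
  by apply: (quasipoint_upward qC _ Cc) => //; apply/L'L/L'I.
Qed.

Lemma borel_setI (M : topologicalType) : setI_closed (borel_sets M).
Proof.
have /sigma_algebraP := smallest_sigma_algebra setT (open_sets M).
by move=> /(_ (fun _ _ _ _ => I)) [].
Qed.

Lemma borel_setC (M : topologicalType) (A : set M) :
  borel_sets M A -> borel_sets M (~` A).
Proof.
have [_ BC _] := smallest_sigma_algebra setT (open_sets M).
by move=> /BC; rewrite setTD.
Qed.

Lemma borel_open (M : topologicalType) (A : set M) : open A -> borel_sets M A.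
Proof. by move=> oA; apply: sub_sigma_algebra. Qed.

Lemma borel_closed (M : topologicalType) (A : set M) : closed A -> borel_sets M A.
Proof.
by move=> cA; rewrite -(setCK A); apply: borel_setC; apply: borel_open; apply: closed_openC.
Qed.

Lemma open_boundaryE (M : topologicalType) (U : set M) : open U ->
  boundary U = closure U `&` ~` U.
Proof. by move=> oU; congr (_ `&` _); apply/esym/closure_id/open_closedC. Qed.

Lemma borel_boundary (M : topologicalType) (U : set M) :
  open U -> borel_sets M (boundary U).
Proof.
move=> oU; rewrite open_boundaryE //; apply: borel_setI.
- by apply: borel_closed; exact: closed_closure.
- by apply: borel_setC; exact: borel_open.
Qed.

Lemma open_disjoint_closure (M : topologicalType) (U V : set M) :
  open V -> U `&` V = set0 -> closure U `&` V = set0.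
Proof.
move=> oV UV0; apply/disjoints_subset.
have -> : ~` V = closure (~` V) by apply/closure_id/open_closedC.
by apply: closureS; apply/disjoints_subset.
Qed.

Section BorelQuasipoint.
Variables (M : topologicalType) (C : set (set M)).
Hypothesis qC : is_quasipoint (borel_sets M) C.

Lemma boundary_notin_quasipoint (B : set (set M)) (U : set M) :
  is_quasipoint (open_sets M) B -> B `<=` C -> open U -> ~ C (boundary U).
Proof.
move=> qB BC oU CbU; have Cmeet := quasipoint_pre_meet qC.1.
have [BU|nBU] := pselect (B U).
  have [x [Ux]] := Cmeet _ _ (BC _ BU) CbU.
  by rewrite open_boundaryE // => -[_].
have [b Bb Ub0] := quasipoint_disjoint qB (@openI M) oU nBU.
have ob : open b by have [[BL _ _ _] _] := qB; exact: BL.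
have [x [bx [clUx _]]] := Cmeet _ _ (BC _ Bb) CbU.
have : (closure U `&` b) x by [].
by rewrite open_disjoint_closure.
Qed.

Lemma quasipoint_open_trace :
  (forall U : set M, open U -> ~ C (boundary U)) ->
  is_quasipoint (open_sets M) (C `&` open_sets M).
Proof.
move=> Cbd; have qB := quasipoint_pre_trace qC (@borel_open M) openT (@openI M).
split=> // B' qB' BB'; apply/seteqP; split=> // U B'U.
have oU : open U by have [B'L _ _ _] := qB'; exact: B'L.
split=> //; apply: contrapT => nCU.
have CnU := quasipoint_setC qC (@borel_setI M)
  (borel_setC (borel_open oU)) (borel_open oU) nCU.
have Cnbd := quasipoint_setC qC (@borel_setI M)
  (borel_setC (borel_boundary oU)) (borel_boundary oU) (Cbd U oU).
have oV : open (~` closure U) by exact/closed_openC/closed_closure.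
have CV : C (~` closure U).
  apply: (quasipoint_upward qC (borel_open oV)
    (quasipoint_setI qC (@borel_setI M) CnU Cnbd)).
  by move=> x [nUx nbdx] clUx; apply: nbdx; rewrite open_boundaryE.
have [x [Ux nclUx]] := quasipoint_pre_meet qB' B'U (BB' _ (conj CV oV)).
exact/nclUx/subset_closure.
Qed.

End BorelQuasipoint.

Theorem proposition3p45 (M : topologicalType) (C : set (set M)) :
  is_quasipoint (borel_sets M) C ->
  ((exists2 B, is_quasipoint (open_sets M) B & B `<=` C) <->
   (forall U : set M, open U -> ~ C (boundary U))).
Proof.
move=> qC; split.
- by move=> [B qB BC] U; apply: (boundary_notin_quasipoint qC qB BC).
- move=> Cbd; exists (C `&` open_sets M); last by move=> X [].
  exact: quasipoint_open_trace.
Qed.
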